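(* If $n\ge2$, then $$b_n(y;-t,t,t)=(-1)^n2^{n-2}t^{n-1}(y-1)y.$$ In particular, for $n\ge2$ the statistic on $I_n$ recording the number of levels is balanced, i.e. the number of members of $I_n$ with an even number of levels equals the number with an odd number of levels.
   Context: An inversion sequence of length $n$ is a sequence $\rho=\rho_1\cdots\rho_n$ of integers with $1\le \rho_i\le i$ for all $i$; $I_n$ is the set of them and $I_{n,i}$ those with last letter $i$. A level, descent, or ascent of $\rho$ is an index $i\in[n-1]$ with $\rho_i=\rho_{i+1}$, $\rho_i>\rho_{i+1}$, or $\rho_i<\rho_{i+1}$, respectively. Define $b_n(y;p,q,r)=\sum_{i=1}^n y^i\sum_{\rho\in I_{n,i}}p^{\mathrm{lev}(\rho)}q^{\mathrm{des}(\rho)}r^{\mathrm{asc}(\rho)}$. *)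

From mathcomp Require Import all_boot all_order all_algebra.
Set Implicit Arguments. Unset Strict Implicit. Unset Printing Implicit Defensive.
Import GRing.Theory.

(* A word rho = rho_1 ... rho_n is represented by the list s = [rho_1; ...; rho_n];
   rho_{j+1} is [nth 0 s j] (0-based list position j). *)

Definition is_invseq (s : seq nat) : bool :=
  all (fun j => (0 < nth 0 s j) && (nth 0 s j <= j.+1)) (iota 0 (size s)).

Definition lev (s : seq nat) : nat :=
  count (fun j => nth 0 s j == nth 0 s j.+1) (iota 0 (size s).-1).
Definition des (s : seq nat) : nat :=
  count (fun j => nth 0 s j.+1 < nth 0 s j) (iota 0 (size s).-1).
Definition asc (s : seq nat) : nat :=
  count (fun j => nth 0 s j < nth 0 s j.+1) (iota 0 (size s).-1).

(* Candidate words of length n with letters in {0,...,n}: a finite type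
   containing all of I_n; I_n is cut out by [is_invseq]. *)
Definition word (n : nat) (t : n.-tuple 'I_n.+1) : seq nat := map val t.

Definition in_Ini (n i : nat) (t : n.-tuple 'I_n.+1) : bool :=
  is_invseq (word t) && (last 0 (word t) == i).

Definition b (R : comPzRingType) (n : nat) (y p q r : R) : R :=
  \sum_(1 <= i < n.+1)
     (y ^+ i * \sum_(t : n.-tuple 'I_n.+1 | in_Ini i t)
                  (p ^+ lev (word t) * q ^+ des (word t) * r ^+ asc (word t)))%R.

From mathcomp Require Import all_boot all_order all_algebra.
Import GRing.Theory.
From mathcomp Require Import zify ring.

(* With p = -t and q = r = t, an inversion sequence rho of length n has weight
   (-1)^lev(rho) t^(n-1), because lev + des + asc = n - 1.  Let F_n(i) be the
   signed count of I_{n,i} by (-1)^lev and S_n = sum_i F_n(i).  Appending a letter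
   j to rho in I_n creates a new level exactly when j is the last letter of rho, so
   F_{n+1}(j) = S_n - 2 F_n(j) for 1 <= j <= n+1, and summing over j gives
   S_{n+1} = (n - 1) S_n.  Hence S_n = 0 and F_{n+1} = -2 F_n for n >= 2, and from
   F_2(i) = [i = 2] - [i = 1] we get F_n(i) = (-1)^n 2^(n-2) ([i = 2] - [i = 1]).
   The vanishing of S_n is the balance of the level statistic. *)

Lemma lev_cons2 x y s : lev [:: x, y & s] = (x == y) + lev (y :: s).
Proof. by rewrite /lev /= -add1n iotaDl count_map. Qed.

Lemma lev_rcons s j : s != [::] -> lev (rcons s j) = lev s + (last 0 s == j).
Proof.
elim: s => // x [|y s] IH _; first by rewrite /lev /= addn0.
by rewrite rcons_cons lev_cons2 /= IH // lev_cons2 addnA.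
Qed.

Lemma count_trichotomy (f g : nat -> nat) (r : seq nat) :
  count (fun j => f j == g j) r + count (fun j => g j < f j) r
  + count (fun j => f j < g j) r = size r.
Proof.
elim: r => //= a r <-.
by case: (ltngtP (f a) (g a)) => _ /=; lia.
Qed.

Lemma lev_des_asc s : lev s + des s + asc s = (size s).-1.
Proof. by rewrite /lev /des /asc count_trichotomy size_iota. Qed.

Lemma is_invseq_rcons s j :
  is_invseq (rcons s j) = is_invseq s && (0 < j <= (size s).+1).
Proof.
rewrite /is_invseq size_rcons -[(size s).+1]addn1 iotaD all_cat /= andbT.
rewrite nth_rcons ltnn eqxx.
congr (_ && _); last by rewrite add0n addn1.
apply/eq_in_all => k; rewrite mem_iota => /andP[_ lt_ks].
by rewrite nth_rcons lt_ks.
Qed.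

Lemma invseq_letter_le s x : is_invseq s -> x \in s -> x <= size s.
Proof.
move=> /allP s_inv /(nthP 0)[k lt_ks <-].
have /andP[_ le_sk] : 0 < nth 0 s k <= k.+1 by apply: s_inv; rewrite mem_iota.
exact: leq_trans le_sk lt_ks.
Qed.

Fixpoint invseqs n : seq (seq nat) :=
  if n is m.+1 then [seq rcons s j | s <- invseqs m, j <- iota 1 n] else [:: [::]].
Arguments invseqs : simpl never.

Lemma invseqsS n : invseqs n.+1 = [seq rcons s j | s <- invseqs n, j <- iota 1 n.+1].
Proof. by []. Qed.

Lemma mem_invseqs n s : (s \in invseqs n) = is_invseq s && (size s == n).
Proof.
elim: n s => [|n IH] s; first by case: s => [|x s]; rewrite ?andbF.
apply/allpairsP/idP => [[[s' j] [+ + ->]] | ].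
  rewrite IH mem_iota is_invseq_rcons size_rcons /=.
  by case/andP=> -> /eqP ->; rewrite eqxx andbT add1n ltnS.
case/lastP: s => [|s j]; first by case/andP.
rewrite is_invseq_rcons size_rcons eqSS => /andP[/andP[s_inv j_s] s_n].
by exists (s, j); rewrite IH mem_iota s_inv s_n add1n ltnS -(eqP s_n).
Qed.

Lemma uniq_invseqs n : uniq (invseqs n).
Proof.
elim: n => // n IH; apply: allpairs_uniq => //; first exact: iota_uniq.
move=> [s j] [s' j'] _ _ /= eq_rcons.
by move/eqP: eq_rcons; rewrite eqseq_rcons => /andP[/eqP-> /eqP->].
Qed.

Lemma invseqsS_last n s : s \in invseqs n.+1 -> 0 < last 0 s <= n.+1.
Proof. by case/allpairsP=> [[s' j] [_ + ->]]; rewrite last_rcons mem_iota. Qed.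

Lemma perm_invseqs_tuples n :
  perm_eq [seq word t | t <- enum [pred t : n.-tuple 'I_n.+1 | is_invseq (word t)]]
          (invseqs n).
Proof.
apply: uniq_perm; [|exact: uniq_invseqs|].
  by rewrite map_inj_uniq ?enum_uniq // => t1 t2 /(inj_map val_inj)/val_inj.
move=> s; rewrite mem_invseqs; apply/mapP/idP => [[t] | /andP[s_inv /eqP s_n]].
  by rewrite mem_enum inE => t_inv ->; rewrite t_inv size_map size_tuple eqxx.
have sz : size (map (@inord n) s) == n by rewrite size_map s_n.
have word_t : word (Tuple sz) = s.
  rewrite /word /= -map_comp map_id_in // => x x_s /=.
  by rewrite inordK // ltnS -s_n invseq_letter_le.
by exists (Tuple sz); rewrite ?mem_enum ?inE word_t.
Qed.

Lemma sum_invseqs_tuple {R : nmodType} {n} (P : pred (seq nat)) (F : seq nat -> R) :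
  (\sum_(t : n.-tuple 'I_n.+1 | is_invseq (word t) && P (word t)) F (word t)
   = \sum_(s <- invseqs n | P s) F s)%R.
Proof.
rewrite -(perm_big _ (perm_invseqs_tuples n)) big_map big_enum_cond.
by apply: eq_bigl => t; rewrite inE.
Qed.

Local Open Scope ring_scope.

Lemma sum_sign_eq_count (R : comPzRingType) (r : seq nat) a :
  \sum_(j <- r) (-1) ^+ (a == j) = (size r)%:R - 2 * (count_mem a r)%:R :> R.
Proof.
elim: r => [|b r IH]; first by rewrite big_nil mulr0 subr0.
by rewrite big_cons IH /= eq_sym; case: (b == a); rewrite /= ?natrD; ring.
Qed.

Section SignedCounts.
Variable R : comPzRingType.

Definition signed_count n : R := \sum_(s <- invseqs n) (-1) ^+ lev s.

Definition signed_count_last n i : R :=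
  \sum_(s <- invseqs n | last 0%N s == i) (-1) ^+ lev s.

Lemma signed_count_last_out n i :
  ~~ (0 < i <= n.+1)%N -> signed_count_last n.+1 i = 0.
Proof.
move=> i_out; rewrite /signed_count_last big_seq_cond big1 // => s.
by case/andP=> /invseqsS_last s_last /eqP s_i; rewrite -s_i s_last in i_out.
Qed.

Lemma signed_count_lastS n i : (0 < i <= n.+2)%N ->
  signed_count_last n.+2 i = signed_count n.+1 - 2 * signed_count_last n.+1 i.
Proof.
move=> i_in; rewrite /signed_count_last big_mkcond invseqsS big_allpairs_dep.
transitivity (\sum_(s <- invseqs n.+1) (-1) ^+ lev s * (-1) ^+ (last 0%N s == i) : R).
  apply: eq_big_seq => s /invseqsS_last /andP[last_gt0 _].
  have s_nil : s != [::] by case: s last_gt0.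
  under eq_bigr => j _ do rewrite last_rcons.
  rewrite -big_mkcond -big_filter filter_pred1_uniq ?iota_uniq ?mem_iota ?add1n //.
  by rewrite big_seq1 lev_rcons // exprD.
rewrite (bigID (fun s => last 0%N s == i)) /=.
rewrite (eq_bigr (fun s => - (-1) ^+ lev s)); last by move=> s ->; rewrite mulrN1.
rewrite [X in _ + X](eq_bigr (fun s => (-1) ^+ lev s)); last first.
  by move=> s /negbTE->; rewrite mulr1.
rewrite sumrN /signed_count [X in _ = X - _](bigID (fun s => last 0%N s == i)) /=.
ring.
Qed.

Lemma signed_countS n : signed_count n.+2 = n%:R * signed_count n.+1.
Proof.
rewrite /signed_count invseqsS big_allpairs_dep mulr_sumr.
apply: eq_big_seq => s /invseqsS_last /andP[last_gt0 last_le].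
have s_nil : s != [::] by case: s last_gt0 {last_le}.
under eq_bigr => j _ do rewrite lev_rcons // exprD.
rewrite -mulr_sumr sum_sign_eq_count size_iota count_uniq_mem ?iota_uniq //.
rewrite mem_iota last_gt0 add1n ltnS (leq_trans last_le) //= -addn2 natrD.
ring.
Qed.

Lemma signed_count_eq0 n : signed_count n.+2 = 0.
Proof. by elim: n => [|n IH]; rewrite signed_countS ?mul0r ?IH ?mulr0. Qed.

Lemma signed_count_last2 i :
  signed_count_last 2 i = (i == 2)%:R - (i == 1)%:R.
Proof.
rewrite /signed_count_last (_ : invseqs 2 = [:: [:: 1; 1]; [:: 1; 2]]%N) //.
by rewrite !big_cons big_nil; case: i => [|[|[|i]]] /=; ring.
Qed.

Lemma signed_count_last_closed n i :
  signed_count_last n.+2 i = (-1) ^+ n * 2 ^+ n * ((i == 2)%:R - (i == 1)%:R).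
Proof.
elim: n i => [|n IH] i; first by rewrite signed_count_last2; ring.
have [i_in | i_out] := boolP (0 < i <= n.+3)%N.
  by rewrite signed_count_lastS // signed_count_eq0 IH !exprS; ring.
rewrite signed_count_last_out //.
by case: i i_out => [|[|[|i]]] //= _; rewrite subrr mulr0.
Qed.

Lemma sign_weight (t : R) s :
  (- t) ^+ lev s * t ^+ des s * t ^+ asc s = (-1) ^+ lev s * t ^+ (size s).-1.
Proof. by rewrite -lev_des_asc (exprNn t) !exprD; ring. Qed.

Lemma b_sign_levels n (y t : R) :
  b n y (- t) t t = \sum_(1 <= i < n.+1) y ^+ i * (t ^+ n.-1 * signed_count_last n i).
Proof.
rewrite /b; apply: eq_bigr => i _; congr (_ * _).
rewrite /in_Ini (sum_invseqs_tuple (fun s => last 0%N s == i)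
  (fun s => (- t) ^+ lev s * t ^+ des s * t ^+ asc s)).
rewrite /signed_count_last mulr_sumr big_seq_cond [RHS]big_seq_cond.
apply: eq_bigr => s; rewrite mem_invseqs => /andP[/andP[_ /eqP <-] _].
by rewrite sign_weight mulrC.
Qed.

End SignedCounts.

Lemma sum_sign_card (R : pzRingType) (T : finType) (P : pred T) (f : T -> nat) :
  \sum_(x | P x) (-1) ^+ f x =
  #|[pred x | P x && ~~ odd (f x)]|%:R - #|[pred x | P x && odd (f x)]|%:R :> R.
Proof.
rewrite (bigID (fun x => odd (f x))) /= addrC -!sum1_card !natr_sum -sumrN.
congr (_ + _); apply: eq_big => x; rewrite ?inE //.
  by case/andP=> _ /negbTE f_even; rewrite -signr_odd f_even.
by case/andP=> _ f_odd; rewrite -signr_odd f_odd.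
Qed.

Theorem proposition3p8 (n : nat) : (2 <= n)%N ->
  (forall (R : comPzRingType) (y t : R),
     b n y (- t) t t = ((-1) ^+ n * 2 ^+ (n - 2) * t ^+ n.-1 * (y - 1) * y)%R)
  /\
  #|[pred s : n.-tuple 'I_n.+1 | is_invseq (word s) && ~~ odd (lev (word s))]|
  = #|[pred s : n.-tuple 'I_n.+1 | is_invseq (word s) && odd (lev (word s))]|.
Proof.
case: n => [|[|m]] // _; split.
  move=> R y t; rewrite b_sign_levels.
  under eq_bigr => i _ do rewrite signed_count_last_closed.
  rewrite big_ltn // big_ltn // big_nat_cond big1 => [|i /andP[/andP[lt2i _] _]].
    by rewrite !subSS subn0 !exprS /=; ring.
  by case: i lt2i => [|[|[|i]]] //= _; ring.
have sum_signs_eq0 :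
    \sum_(t : m.+2.-tuple 'I_m.+3 | is_invseq (word t)) (-1) ^+ lev (word t) = 0 :> int.
  transitivity (signed_count int m.+2); last exact: signed_count_eq0.
  rewrite /signed_count -(sum_invseqs_tuple xpredT).
  by apply: eq_bigl => t; rewrite andbT.
move/eqP: sum_signs_eq0.
by rewrite sum_sign_card subr_eq0 Num.Theory.eqr_nat => /eqP.
Qed.
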